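(* Let $w\in\mathbb{Q}^{V_+}_{\ge0}$, $b\in\mathbb{Z}^{V_+}_{\ge0}$, $\emptyset\ne S\subseteq V_+$ and $k'\in\mathbb{Z}_{>0}$, and assume $k_\xi(S)-k'\le b(S)$ for every $\xi\in[N]$. For each $\xi$, write $S=\{v_1,\dots,v_\ell\}$ with $w_{v_1}\le\dots\le w_{v_\ell}$, let $j\in[\ell]$ be the smallest index with $k_\xi(S)-k'\le\sum_{i\in[j]}b_{v_i}$, and set $\bar\alpha^\xi_S=\mathbb{I}(k_\xi(S)>k')\,w_{v_j}$ and $\bar\beta^\xi_v=\mathbb{I}(v\in\{v_1,\dots,v_{j-1}\})(w_v-w_{v_j})$ for $v\in V_+$. Define $\hat\alpha^\xi_{S'}=\mathbb{I}(S'=S)\,p_\xi\bar\alpha^\xi_S$ for all $\emptyset\ne S'\subseteq V_+$, $\xi\in[N]$, and $\hat\beta^\xi_v=p_\xi\bar\beta^\xi_v$. Then $(\hat\alpha,\hat\beta)\in\mathcal{A}$, and for every $\bar x\in\{x\in\mathcal{X}:x(E(S))\le|S|-k'\}$ every $\theta\in\operatorname{proj}_\theta(\Gamma(\bar x,\hat\alpha,\hat\beta))$ satisfies $$\theta(S)\ge\mathcal{L}^*(S,k')\cdot\big(1+\bar x(E(S))-|S|+k'\big).$$ In particular, if $x(E(S))\le|S|-k'$ is valid for $\mathcal{P}$, then the inequality $\theta(S)\ge\mathcal{L}^*(S,k')(1+x(E(S))-|S|+k')$ (with $x$ free) is valid for $\mathcal{P}$.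
   Context: $G=(V,E)$ complete undirected graph, $V=\{0\}\cup V_+$ ($V_+$ customers), edge costs $c\in\mathbb{Q}^E_{\ge0}$; capacity $C>0$; scenarios $\xi\in[N]$ with demands $d^\xi\in\mathbb{Q}^{V_+}_{\ge0}$ ($d^\xi(v)\le C$) and probabilities $p_\xi\ge0$, $\sum_\xi p_\xi=1$. $f(S)=\sum_{i\in S}f(i)$; $k_\xi(S)=\lceil d^\xi(S)/C\rceil$; $\bar d=\sum_\xi p_\xi d^\xi$; $\mathbb{I}$ is the indicator; $E(S)$ edges with both ends in $S$, $\delta(S)$ edges with exactly one end in $S$. $\mathcal{X}$ is one of $\mathcal{X}_{\mathrm{sub}}=\{x\in[0,2]^E: x(\delta(v))=2\ \forall v\in V_+,\ x(E(S))\le|S|-1\ \forall\emptyset\ne S\subseteq V_+\}$ or $\mathcal{X}_{\mathrm{cvrp}}=\mathcal{X}_{\mathrm{sub}}\cap\{x:x(\delta(0))=2k,\ x(E(S))\le|S|-\lceil\bar d(S)/C\rceil\ \forall \emptyset\ne S\subseteq V_+\}$ ($k$ a given positive integer). Vectors $y\in\mathbb{R}^{[N]\times V_+}$ have entries $y^\xi_v$; $[\mathbf 0,b]^N=\{y:0\le y^\xi_v\le b_v\}$. Multipliers: $\alpha=(\alpha^\xi_S)_{\xi\in[N],\emptyset\ne S\subseteq V_+}\ge0$, $\beta=(\beta^\xi_v)\le0$. Define $\nu(\alpha,\beta)=\sum_\xi\sum_S\alpha^\xi_S(k_\xi(S)-|S|)+\sum_\xi\sum_{v}\beta^\xi_v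 b_v$. $\mathcal{A}$ is the set of $(\alpha,\beta)$ with $\alpha\ge0$, $\beta\le0$ and $\beta^\xi_v+\sum_{S\ni v}\alpha^\xi_S\le0$ for all $\xi$ and all $v$ with $w_v=0$. For $\bar x\in\mathcal{X}$, $\Gamma(\bar x,\alpha,\beta)$ is the set of $(\theta,y)\in\mathbb{R}^{V_+}_{\ge0}\times[\mathbf 0,b]^N$ with $\sum_\xi\sum_v(\beta^\xi_v+\sum_{S\ni v}\alpha^\xi_S)y^\xi_v\ge\sum_\xi\sum_S\alpha^\xi_S\bar x(E(S))+\nu(\alpha,\beta)$ and $\theta_v\ge\sum_\xi p_\xi w_v y^\xi_v$ for all $v\in V_+$; $\operatorname{proj}_\theta$ is its projection onto $\theta$. $\mathcal{P}=\{(x,\theta):x\in\mathcal{X},\ \theta\in\operatorname{proj}_\theta(\widehat{\mathrm{SRI}}(x))\}$, where $\widehat{\mathrm{SRI}}(x)$ is the set of $(\theta,y)\in\mathbb{R}^{V_+}_{\ge0}\times[\mathbf 0,b]^N$ with $y^\xi(S)\ge k_\xi(S)+x(E(S))-|S|$ for all $\emptyset\ne S\subseteq V_+$, $\xi\in[N]$, and $\theta_v\ge\sum_\xi p_\xi w_v y^\xi_v$ for all $v$. Finally $\mathcal{L}^*(S,k')=\sum_\xi p_\xi\mathcal{L}^*_\xi(S,k')$ where $\mathcal{L}^*_\xi(S,k')=\min\{\sum_{v\in V_+}w_vy_v: y(S)\ge k_\xi(S)-k',\ y_v\le b_v\ \forall v\in V_+,\ y\ge0\}$. *)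

From HB Require Import structures.
From mathcomp Require Import all_boot all_order all_algebra.
From mathcomp Require Import reals.
Set Implicit Arguments. Unset Strict Implicit. Unset Printing Implicit Defensive.
Import Order.TTheory GRing.Theory Num.Theory.
Local Open Scope ring_scope.

(* Vertices: V = option 'I_n, with None = depot 0 and Some i = customer i
   (V_+ = 'I_n).  Edges of the complete graph on V: 2-element vertex sets. *)
Definition Edge (n : nat) := {e : {set option 'I_n} | #|e| == 2%N}.

Definition xE (R : realType) n (x : Edge n -> R) (S : {set 'I_n}) : R :=
  \sum_(e : Edge n | val e \subset Some @: S) x e.

Definition xdelta (R : realType) n (x : Edge n -> R) (v : option 'I_n) : R :=
  \sum_(e : Edge n | v \in val e) x e.

Definition fS (R : numDomainType) n (f : 'I_n -> R) (S : {set 'I_n}) : R :=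
  \sum_(i in S) f i.

Definition kxi n N (C : rat) (d : 'I_N -> 'I_n -> rat) (xi : 'I_N)
  (S : {set 'I_n}) : int := Num.ceil (fS (d xi) S / C).

Definition dbar n N (p : 'I_N -> rat) (d : 'I_N -> 'I_n -> rat) (i : 'I_n) : rat :=
  \sum_(xi < N) p xi * d xi i.

Inductive Xkind := XSub | XCvrp of nat.

Definition inXsub (R : realType) n (x : Edge n -> R) : Prop :=
  [/\ forall e, 0 <= x e <= 2,
      forall v : 'I_n, xdelta x (Some v) = 2
    & forall S : {set 'I_n}, (0 < #|S|)%N -> xE x S <= #|S|%:R - 1].

Definition inX (R : realType) n N (C : rat) (p : 'I_N -> rat)
  (d : 'I_N -> 'I_n -> rat) (X : Xkind) (x : Edge n -> R) : Prop :=
  match X with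
  | XSub => inXsub x
  | XCvrp k =>
      [/\ inXsub x, xdelta x None = 2 * k%:R
        & forall S : {set 'I_n}, (0 < #|S|)%N ->
            xE x S <= #|S|%:R - (Num.ceil (fS (dbar p d) S / C))%:~R]
  end.

Definition inBox (R : realType) n N (b : 'I_n -> nat) (y : 'I_N -> 'I_n -> R) :=
  forall xi v, 0 <= y xi v <= (b v)%:R.

Definition nu (R : realType) n N (C : rat) (d : 'I_N -> 'I_n -> rat)
  (b : 'I_n -> nat) (alpha : 'I_N -> {set 'I_n} -> R) (beta : 'I_N -> 'I_n -> R) : R :=
  \sum_(xi < N) \sum_(S : {set 'I_n} | (0 < #|S|)%N)
      alpha xi S * ((kxi C d xi S)%:~R - #|S|%:R)
  + \sum_(xi < N) \sum_(v < n) beta xi v * (b v)%:R.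

Definition alphaAt (R : realType) n N (alpha : 'I_N -> {set 'I_n} -> R) xi (v : 'I_n) : R :=
  \sum_(S : {set 'I_n} | (0 < #|S|)%N && (v \in S)) alpha xi S.

Definition inA (R : realType) n N (w : 'I_n -> rat)
  (alpha : 'I_N -> {set 'I_n} -> R) (beta : 'I_N -> 'I_n -> R) : Prop :=
  [/\ forall xi (S : {set 'I_n}), (0 < #|S|)%N -> 0 <= alpha xi S,
      forall xi v, beta xi v <= 0
    & forall xi v, w v = 0 -> beta xi v + alphaAt alpha xi v <= 0].

Definition inGamma (R : realType) n N (C : rat) (p : 'I_N -> rat)
  (d : 'I_N -> 'I_n -> rat) (w : 'I_n -> rat) (b : 'I_n -> nat)
  (xbar : Edge n -> R) (alpha : 'I_N -> {set 'I_n} -> R) (beta : 'I_N -> 'I_n -> R)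
  (theta : 'I_n -> R) (y : 'I_N -> 'I_n -> R) : Prop :=
  [/\ forall v, 0 <= theta v,
      inBox b y,
      \sum_(xi < N) \sum_(v < n) (beta xi v + alphaAt alpha xi v) * y xi v >=
        \sum_(xi < N) \sum_(S : {set 'I_n} | (0 < #|S|)%N) alpha xi S * xE xbar S
        + nu C d b alpha beta
    & forall v, theta v >= \sum_(xi < N) ratr (p xi) * ratr (w v) * y xi v].

Definition inSRI (R : realType) n N (C : rat) (p : 'I_N -> rat)
  (d : 'I_N -> 'I_n -> rat) (w : 'I_n -> rat) (b : 'I_n -> nat)
  (x : Edge n -> R) (theta : 'I_n -> R) (y : 'I_N -> 'I_n -> R) : Prop :=
  [/\ forall v, 0 <= theta v,
      inBox b y,
      forall xi (S : {set 'I_n}), (0 < #|S|)%N ->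
        fS (y xi) S >= (kxi C d xi S)%:~R + xE x S - #|S|%:R
    & forall v, theta v >= \sum_(xi < N) ratr (p xi) * ratr (w v) * y xi v].

Definition inP (R : realType) n N (C : rat) (p : 'I_N -> rat)
  (d : 'I_N -> 'I_n -> rat) (w : 'I_n -> rat) (b : 'I_n -> nat) (X : Xkind)
  (x : Edge n -> R) (theta : 'I_n -> R) : Prop :=
  inX C p d X x /\ exists y, inSRI C p d w b x theta y.

(* L*_xi(S,k') = min { sum_v w_v y_v : y(S) >= k_xi(S) - k', 0 <= y <= b },
   taken as the infimum of the (nonempty, bounded below, attained) value set. *)
Definition Lstar_xi (R : realType) n N (C : rat) (d : 'I_N -> 'I_n -> rat)
  (w : 'I_n -> rat) (b : 'I_n -> nat) (S : {set 'I_n}) (k' : nat) (xi : 'I_N) : R :=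
  inf (fun r : R => exists y : 'I_n -> R,
        [/\ fS y S >= (kxi C d xi S - k'%:Z)%:~R,
            forall v, 0 <= y v <= (b v)%:R
          & r = \sum_(v < n) ratr (w v) * y v]).

Definition Lstar (R : realType) n N (C : rat) (p : 'I_N -> rat)
  (d : 'I_N -> 'I_n -> rat) (w : 'I_n -> rat) (b : 'I_n -> nat)
  (S : {set 'I_n}) (k' : nat) : R :=
  \sum_(xi < N) ratr (p xi) * Lstar_xi R C d w b S k' xi.

(* Greedy index (0-based): smallest j < size s with t <= b(v_0)+...+b(v_j);
   returns size s if none. *)
Definition jidx n (b : 'I_n -> nat) (s : seq 'I_n) (t : int) : nat :=
  find (fun m => t <= (\sum_(v <- take m.+1 s) b v)%:Z) (iota 0 (size s)).

(* bar alpha^xi_S for the ordering s = [v_1; ...; v_l] of S *)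
Definition alphabar n N (C : rat) (d : 'I_N -> 'I_n -> rat) (w : 'I_n -> rat)
  (b : 'I_n -> nat) (S : {set 'I_n}) (k' : nat) (xi : 'I_N) (s : seq 'I_n) : rat :=
  let t := kxi C d xi S - k'%:Z in
  (if k'%:Z < kxi C d xi S then 1 else 0) * nth 0 (map w s) (jidx b s t).

Definition betabar n N (C : rat) (d : 'I_N -> 'I_n -> rat) (w : 'I_n -> rat)
  (b : 'I_n -> nat) (S : {set 'I_n}) (k' : nat) (xi : 'I_N) (s : seq 'I_n)
  (v : 'I_n) : rat :=
  let t := kxi C d xi S - k'%:Z in
  let j := jidx b s t in
  (if v \in take j s then 1 else 0) * (w v - nth 0 (map w s) j).

(* Fix a scenario and let t = k(S) - k'.  The multipliers are p times an optimal dual solution of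
   the covering LP  min { w.y : y(S) >= t, 0 <= y <= b }  whose value is L*(S,k').  Scanning S by
   increasing weight, the pivot v_j is the first customer at which the capacities cover t; its
   weight alpha and the savings beta_v = w_v - w_(v_j) <= 0 of the cheaper customers satisfy
   alpha + beta_v <= w_v on S, and filling the cheaper customers to capacity and the remaining
   demand on the pivot is a primal solution of cost D = alpha t + sum_v beta_v b_v >= alpha, so
   L* <= D.  Summing theta_v >= sum_xi p_xi w_v y_v over S, dual feasibility and the inequality
   defining Gamma give theta(S) >= sum_xi p_xi (D + alpha delta) with
   delta = x(E(S)) - |S| + k' <= 0, and D + alpha delta >= D (1 + delta) >= L* (1 + delta) as long
   as 1 + delta >= 0 (otherwise the bound is nonpositive).  A point of P lies in Gamma with the y of
   its SRI certificate, since beta <= 0 <= alpha. *)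

From HB Require Import structures.
From mathcomp Require Import all_boot all_order all_algebra.
From mathcomp Require Import reals classical_sets.
From mathcomp Require Import zify ring lra.
Set Implicit Arguments. Unset Strict Implicit. Unset Printing Implicit Defensive.
Import Order.TTheory GRing.Theory Num.Theory.
Local Open Scope ring_scope.

Section GreedyIndex.
Variables (n : nat) (b : 'I_n -> nat) (s : seq 'I_n) (t : int).

Local Notation covers m := (t <= (\sum_(v <- take m.+1 s) b v)%:Z).

Lemma jidx_minimal : (0 < jidx b s t)%N ->
  (\sum_(v <- take (jidx b s t) s) b v)%:Z < t.
Proof.
move=> j_gt0; set j := jidx b s t.
have j_le : (j <= size s)%N by rewrite -(size_iota 0 (size s)) find_size.
have := @before_find _ 0%N (fun m => covers m) (iota 0 (size s)) j.-1.
rewrite -/j nth_iota ?add0n ?prednK //.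
by move=> /(_ (leqnn _)) /negbT; rewrite -ltNge.
Qed.

Lemma jidx_eq0 : t <= 0 -> jidx b s t = 0%N.
Proof. by move=> t_le0; case: (posnP (jidx b s t)) => // /jidx_minimal; lia. Qed.

Hypotheses (s_ne : (0 < size s)%N) (s_cover : t <= (\sum_(v <- s) b v)%:Z).

Let has_cover : has (fun m => covers m) (iota 0 (size s)).
Proof.
apply/hasP; exists (size s).-1; first by rewrite mem_iota /= add0n ltn_predL.
by rewrite prednK // take_size.
Qed.

Lemma jidx_lt_size : (jidx b s t < size s)%N.
Proof. by rewrite /jidx -{2}(size_iota 0 (size s)) -has_find. Qed.

Lemma jidx_covers : covers (jidx b s t).
Proof. by have := nth_find 0%N has_cover; rewrite -/(jidx b s t) nth_iota ?jidx_lt_size. Qed.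

End GreedyIndex.

Section SortedPivot.
Variables (T : eqType) (R : numDomainType) (f : T -> R) (s : seq T) (x0 : T) (i : nat).
Hypotheses (s_sorted : sorted (fun u v => f u <= f v) s) (i_lt : (i < size s)%N).

Let f_le_nth k l : (k <= l)%N -> (l < size s)%N -> f (nth x0 s k) <= f (nth x0 s l).
Proof.
move=> kl ls.
have f_tr : transitive (fun u v => f u <= f v) by move=> y x z; apply: le_trans.
have f_refl : reflexive (fun u v => f u <= f v) by move=> x; apply: lexx.
by apply: (sorted_leq_nth f_tr f_refl x0 s_sorted); rewrite ?inE //; lia.
Qed.

Lemma sorted_take_le_nth v : v \in take i s -> f v <= f (nth x0 s i).
Proof.
move=> vt; have k_lt := index_mem v (take i s); rewrite vt size_take i_lt in k_lt.
rewrite -(nth_index x0 vt) nth_take //; exact: f_le_nth (ltnW k_lt) i_lt.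
Qed.

Lemma sorted_nth_le_drop v : v \in drop i s -> f (nth x0 s i) <= f v.
Proof.
move=> vd; have k_lt := index_mem v (drop i s); rewrite vd size_drop in k_lt.
rewrite -(nth_index x0 vd) nth_drop; apply: f_le_nth; lia.
Qed.

End SortedPivot.

Definition greedy_pivot n (w : 'I_n -> rat) (b : 'I_n -> nat) (s : seq 'I_n) (t : int) : rat :=
  nth 0 (map w s) (jidx b s t).

Definition greedy_alpha n (w : 'I_n -> rat) (b : 'I_n -> nat) (s : seq 'I_n) (t : int) : rat :=
  (if 0 < t then 1 else 0) * greedy_pivot w b s t.

Definition greedy_beta n (w : 'I_n -> rat) (b : 'I_n -> nat) (s : seq 'I_n) (t : int)
    (v : 'I_n) : rat :=
  (if v \in take (jidx b s t) s then 1 else 0) * (w v - greedy_pivot w b s t).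

Definition greedy_dual n (w : 'I_n -> rat) (b : 'I_n -> nat) (s : seq 'I_n) (t : int) : rat :=
  greedy_alpha w b s t * t%:~R + \sum_v greedy_beta w b s t v * (b v)%:R.

Section GreedyDual.
Variables (n : nat) (w : 'I_n -> rat) (b : 'I_n -> nat) (S : {set 'I_n}) (s : seq 'I_n).
Variable t : int.
Hypotheses (w_ge0 : forall v, 0 <= w v) (s_perm : perm_eq s (enum S))
  (s_sorted : sorted (fun u v => w u <= w v) s) (S_cover : t <= (\sum_(v in S) b v)%:Z).

Local Notation j := (jidx b s t).
Local Notation pivot := (greedy_pivot w b s t).
Local Notation alpha := (greedy_alpha w b s t).
Local Notation beta := (greedy_beta w b s t).

Let s_uniq : uniq s. Proof. by rewrite (perm_uniq s_perm) enum_uniq. Qed.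
Let mem_s v : (v \in s) = (v \in S). Proof. by rewrite (perm_mem s_perm) mem_enum. Qed.
Let s_cover : t <= (\sum_(v <- s) b v)%:Z. Proof. by rewrite (perm_big _ s_perm) big_enum. Qed.

Let pivotE x0 : (0 < size s)%N -> pivot = w (nth x0 s j).
Proof. by move=> s_ne; rewrite /greedy_pivot (nth_map x0) ?jidx_lt_size. Qed.

Lemma greedy_pivot_ge0 : 0 <= pivot.
Proof.
rewrite /greedy_pivot; case: (ltnP j (size (map w s))) => [j_lt|j_ge].
  by have /mapP [v _ ->] := mem_nth 0 j_lt.
by rewrite nth_default.
Qed.

Lemma greedy_alpha_ge0 : 0 <= alpha.
Proof. by rewrite /greedy_alpha; case: ifP; rewrite ?mul1r ?mul0r // greedy_pivot_ge0. Qed.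

Lemma greedy_alpha_eq0 : t <= 0 -> alpha = 0.
Proof. by rewrite /greedy_alpha leNgt => /negbTE ->; rewrite mul0r. Qed.

Lemma greedy_beta_eq0 v : t <= 0 -> beta v = 0.
Proof. by move=> /jidx_eq0 j0; rewrite /greedy_beta j0 take0 mul0r. Qed.

Lemma greedy_beta_notin v : v \notin S -> beta v = 0.
Proof.
rewrite -mem_s => vNs; rewrite /greedy_beta ifN ?mul0r //.
by apply: contra vNs; apply: mem_take.
Qed.

Lemma greedy_beta_le0 v : beta v <= 0.
Proof.
rewrite /greedy_beta; case: ifPn => [vt|]; rewrite ?mul0r // mul1r subr_le0.
have s_ne : (0 < size s)%N by case: (s) vt; rewrite ?take_nil.
by rewrite (pivotE v s_ne) (sorted_take_le_nth v s_sorted (jidx_lt_size s_ne s_cover)).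
Qed.

Lemma greedy_reduced_cost v : v \in S -> alpha + beta v <= w v.
Proof.
move=> vS; have [t_le0|t_gt0] := lerP t 0.
  by rewrite greedy_alpha_eq0 // greedy_beta_eq0 // addr0.
have s_ne : (0 < size s)%N by case: (s) vS (mem_s v) => // ->.
rewrite /greedy_alpha /greedy_beta t_gt0 mul1r; case: ifPn => [_|vNt].
  by rewrite mul1r addrC subrK.
rewrite mul0r addr0 (pivotE v s_ne).
apply: (sorted_nth_le_drop v s_sorted (jidx_lt_size s_ne s_cover)).
by move: (mem_s v); rewrite vS -{1}(cat_take_drop j s) mem_cat (negbTE vNt).
Qed.

Section GreedyPrimal.
Hypothesis t_gt0 : 0 < t.
Variable x0 : 'I_n.

Let r := take j s.
Let u := nth x0 s j.
Let B := (\sum_(v <- r) b v)%N.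
Let m := `|t|%N.

Let tE : t = m%:Z. Proof. by rewrite gtz0_abs. Qed.
Let s_ne : (0 < size s)%N.
Proof. by move: s_cover; case: (s) => //; rewrite big_nil tE; lia. Qed.
Let j_lt : (j < size s)%N. Proof. exact: jidx_lt_size s_ne s_cover. Qed.
Let r_sub v : v \in r -> v \in S. Proof. by rewrite -mem_s; apply: mem_take. Qed.
Let uNr : u \notin r.
Proof. by rewrite (in_take j (mem_nth x0 j_lt)) index_uniq // ltnn. Qed.

Let B_lt : (B < m)%N.
Proof.
have [j0|/jidx_minimal] := posnP j; last by rewrite -/r -/B tE ltz_nat.
by move: t_gt0; rewrite /B /r j0 take0 big_nil tE ltz_nat.
Qed.

Let m_le : (m <= B + b u)%N.
Proof.
have := jidx_covers s_ne s_cover.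
by rewrite (take_nth x0 j_lt) big_rcons /= -/r -/B -/u tE; lia.
Qed.

Definition greedy_fill v : nat :=
  ((if v \in r then b v else 0) + (if v == u then m - B else 0))%N.

Lemma greedy_fill_le v : (greedy_fill v <= b v)%N.
Proof.
rewrite /greedy_fill; case: ifPn => [vr|_].
  by rewrite ifN ?addn0 //; apply: contraNneq uNr => <-.
by case: eqP => [->|_]; lia.
Qed.

Lemma greedy_fill_cover : (\sum_(v in S) greedy_fill v)%:Z = t.
Proof.
rewrite big_split /= -!big_mkcondr /=.
rewrite (eq_bigl (fun v => v \in r)) => [|v]; last by rewrite andb_idl // => /r_sub.
rewrite -big_uniq ?take_uniq // (big_pred1 u) => [|v]; last first.
  by rewrite andb_idl // => /eqP ->; rewrite -mem_s mem_nth.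
by rewrite -[X in (X + _)%N]/B tE; lia.
Qed.

Let fill_cost :
  \sum_v w v * (greedy_fill v)%:R = \sum_(v <- r) w v * (b v)%:R + w u * (m - B)%N%:R.
Proof.
rewrite /greedy_fill.
under eq_bigr do
  rewrite natrD mulrDr !(fun_if (fun k : nat => k%:R)) !(fun_if (GRing.mul (w _))) !mulr0.
by rewrite big_split /= -!big_mkcond /= -big_uniq ?take_uniq // big_pred1_eq.
Qed.

Let beta_cost : \sum_v beta v * (b v)%:R = \sum_(v <- r) w v * (b v)%:R - w u * B%:R.
Proof.
under eq_bigr do
  rewrite /greedy_beta (pivotE x0 s_ne) -/r -/u -mulrA (fun_if (GRing.mul^~ _)) mul1r mul0r.
rewrite -big_mkcond /= -big_uniq ?take_uniq //.
under eq_bigr do rewrite mulrBl.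
by rewrite sumrB -mulr_sumr -natr_sum.
Qed.

Lemma greedy_fill_cost : \sum_v w v * (greedy_fill v)%:R = greedy_dual w b s t.
Proof.
rewrite fill_cost /greedy_dual beta_cost /greedy_alpha t_gt0 mul1r (pivotE x0 s_ne) -/u.
by rewrite natrB ?(ltnW B_lt) // tE -pmulrn; ring.
Qed.

Lemma greedy_alpha_le_fill_cost : alpha <= \sum_v w v * (greedy_fill v)%:R.
Proof.
rewrite /greedy_alpha t_gt0 mul1r (pivotE x0 s_ne) (bigD1 u) //=.
have rest_ge0 : 0 <= \sum_(v | v != u) w v * (greedy_fill v)%:R.
  by apply: sumr_ge0 => v _; rewrite mulr_ge0 ?ler0n.
have fill_u : (0 < greedy_fill u)%N by rewrite /greedy_fill (negbTE uNr) eqxx; lia.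
apply: (@le_trans _ _ (w u * (greedy_fill u)%:R)); first by rewrite ler_peMr // ler1n.
by rewrite lerDl.
Qed.

End GreedyPrimal.

Lemma greedy_primal : 0 < t -> exists y : 'I_n -> nat,
  [/\ (\sum_(v in S) y v)%:Z = t, forall v, (y v <= b v)%N,
      \sum_v w v * (y v)%:R = greedy_dual w b s t
    & alpha <= greedy_dual w b s t].
Proof.
move=> t_gt0; have [x0 _] : exists x0, x0 \in s.
  by move: s_cover; case: (s) => [|x0 s' _]; [rewrite big_nil; lia | exists x0; apply: mem_head].
exists (greedy_fill x0); split.
- exact: greedy_fill_cover.
- exact: greedy_fill_le.
- exact: greedy_fill_cost.
- by rewrite -(greedy_fill_cost t_gt0 x0); apply: greedy_alpha_le_fill_cost.
Qed.

Lemma greedy_dual_eq0 : t <= 0 -> greedy_dual w b s t = 0.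
Proof.
move=> t_le0; rewrite /greedy_dual greedy_alpha_eq0 // mul0r add0r big1 // => v _.
by rewrite greedy_beta_eq0 // mul0r.
Qed.

Lemma greedy_alpha_le_dual : alpha <= greedy_dual w b s t.
Proof.
have [t_le0|/greedy_primal [y [_ _ _ //]]] := lerP t 0.
by rewrite greedy_alpha_eq0 // greedy_dual_eq0.
Qed.

End GreedyDual.

Section ScenarioLP.
Variables (R : realType) (n N : nat) (C : rat) (d : 'I_N -> 'I_n -> rat).
Variables (w : 'I_n -> rat) (b : 'I_n -> nat) (S : {set 'I_n}) (k' : nat) (xi : 'I_N).
Hypothesis w_ge0 : forall v, 0 <= w v.

Local Notation L := (Lstar_xi R C d w b S k' xi).
Local Notation t := (kxi C d xi S - k'%:Z).

Let cost_ge0 (y : 'I_n -> R) : (forall v, 0 <= y v <= (b v)%:R) ->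
  0 <= \sum_v ratr (w v) * y v.
Proof.
by move=> y_box; apply: sumr_ge0 => v _; rewrite mulr_ge0 ?ler0q //; case/andP: (y_box v).
Qed.

Lemma Lstar_xi_ge0 : 0 <= L.
Proof.
rewrite /Lstar_xi; set E := (X in inf X).
have [->|/set0P E_ne] := eqVneq (E : set R) set0; first by rewrite inf0.
by apply: lb_le_inf => // r [y [_ y_box ->]]; apply: cost_ge0.
Qed.

Lemma Lstar_xi_le_cost (y : 'I_n -> R) : t%:~R <= fS y S ->
  (forall v, 0 <= y v <= (b v)%:R) -> L <= \sum_v ratr (w v) * y v.
Proof.
move=> y_cover y_box; apply: ge_inf; last by exists y.
by exists 0 => r [z [_ z_box ->]]; apply: cost_ge0.
Qed.

Variable s : seq 'I_n.
Hypotheses (s_perm : perm_eq s (enum S)) (s_sorted : sorted (fun u v => w u <= w v) s).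
Hypothesis S_cover : t <= (\sum_(v in S) b v)%:Z.

Local Notation alpha := (ratr (greedy_alpha w b s t) : R).
Local Notation dual := (ratr (greedy_dual w b s t) : R).

Lemma Lstar_xi_le_dual : L <= dual.
Proof.
have [t_le0|t_gt0] := lerP t 0.
  rewrite greedy_dual_eq0 // rmorph0.
  apply: (le_trans (@Lstar_xi_le_cost (fun _ => 0) _ _)).
  - by rewrite /fS big1 // lerz0.
  - by move=> v; rewrite lexx ler0n.
  - by rewrite big1 // => v _; rewrite mulr0.
have [y [yS y_le cost _]] := greedy_primal w_ge0 s_perm s_sorted S_cover t_gt0.
rewrite -cost rmorph_sum; under eq_bigr do rewrite rmorphM rmorph_nat.
apply: Lstar_xi_le_cost => [|v]; last by rewrite ler0n ler_nat y_le.
by rewrite /fS -natr_sum -yS.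
Qed.

Lemma Lstar_xi_mul_le (delta : R) : delta <= 0 -> 0 <= 1 + delta ->
  L * (1 + delta) <= dual + alpha * delta.
Proof.
move=> delta_le0 delta_ge; have := Lstar_xi_le_dual.
have : alpha <= dual by rewrite ler_rat (greedy_alpha_le_dual w_ge0 s_perm s_sorted S_cover).
nra.
Qed.

End ScenarioLP.

Section SingleSetMultiplier.
Variables (R : realType) (n N : nat) (S : {set 'I_n}) (a : 'I_N -> R).
Hypothesis S_gt0 : (0 < #|S|)%N.

Local Notation alpha := (fun xi (S' : {set 'I_n}) => (if S' == S then 1 else 0) * a xi).

Lemma sum_single_multiplier xi (F : {set 'I_n} -> R) :
  \sum_(S' : {set 'I_n} | (0 < #|S'|)%N) alpha xi S' * F S' = a xi * F S.
Proof.
rewrite (bigD1 S) //= eqxx mul1r big1 ?addr0 // => S' /andP [_ /negbTE ->].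
by rewrite !mul0r.
Qed.

Lemma alphaAt_single xi v : alphaAt alpha xi v = if v \in S then a xi else 0.
Proof.
rewrite /alphaAt; case: ifPn => vS.
  rewrite (bigD1 S) ?S_gt0 ?vS //= eqxx mul1r big1 ?addr0 // => S' /andP [_ /negbTE ->].
  by rewrite mul0r.
apply: big1 => S' /andP [_ vS']; case: eqP => [eS|_]; last by rewrite mul0r.
by move: vS; rewrite -eS vS'.
Qed.

Lemma cut_lhs_single (beta y : 'I_N -> 'I_n -> R) :
  \sum_(xi < N) \sum_(v < n) (beta xi v + alphaAt alpha xi v) * y xi v =
  \sum_(xi < N) (\sum_(v < n) beta xi v * y xi v + a xi * fS (y xi) S).
Proof.
apply: eq_bigr => xi _; under eq_bigr do rewrite alphaAt_single mulrDl.
rewrite big_split /= /fS mulr_sumr; congr (_ + _).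
by rewrite [RHS]big_mkcond; apply: eq_bigr => v _; case: ifP; rewrite ?mul0r.
Qed.

Lemma cut_rhs_single (C : rat) (d : 'I_N -> 'I_n -> rat) (b : 'I_n -> nat)
    (beta : 'I_N -> 'I_n -> R) (x : Edge n -> R) :
  \sum_(xi < N) \sum_(S' : {set 'I_n} | (0 < #|S'|)%N) alpha xi S' * xE x S'
    + nu C d b alpha beta =
  \sum_(xi < N) (a xi * (xE x S + (kxi C d xi S)%:~R - #|S|%:R)
                 + \sum_(v < n) beta xi v * (b v)%:R).
Proof.
rewrite /nu addrA -!big_split /=; apply: eq_bigr => xi _.
by rewrite !sum_single_multiplier; ring.
Qed.

End SingleSetMultiplier.

Lemma alphabarE n N (C : rat) (d : 'I_N -> 'I_n -> rat) (w : 'I_n -> rat) (b : 'I_n -> nat)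
    (S : {set 'I_n}) (k' : nat) (xi : 'I_N) (s : seq 'I_n) :
  alphabar C d w b S k' xi s = greedy_alpha w b s (kxi C d xi S - k'%:Z).
Proof. by rewrite /greedy_alpha subr_gt0. Qed.

Lemma betabarE n N (C : rat) (d : 'I_N -> 'I_n -> rat) (w : 'I_n -> rat) (b : 'I_n -> nat)
    (S : {set 'I_n}) (k' : nat) (xi : 'I_N) (s : seq 'I_n) (v : 'I_n) :
  betabar C d w b S k' xi s v = greedy_beta w b s (kxi C d xi S - k'%:Z) v.
Proof. by []. Qed.

Section ValidInequality.
Variables (R : realType) (n N : nat) (C : rat) (p : 'I_N -> rat) (d : 'I_N -> 'I_n -> rat).
Variables (w : 'I_n -> rat) (b : 'I_n -> nat) (S : {set 'I_n}) (k' : nat).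
Variable ord : 'I_N -> seq 'I_n.
Hypotheses (p_ge0 : forall xi, 0 <= p xi) (w_ge0 : forall v, 0 <= w v) (S_gt0 : (0 < #|S|)%N).
Hypothesis S_cover : forall xi, kxi C d xi S - k'%:Z <= (\sum_(v in S) b v)%:Z.
Hypothesis ord_sorted : forall xi,
  perm_eq (ord xi) (enum S) /\ sorted (fun u v => w u <= w v) (ord xi).

Local Notation t xi := (kxi C d xi S - k'%:Z).
Local Notation ahat xi := (ratr (p xi * alphabar C d w b S k' xi (ord xi)) : R).
Local Notation alphahat := (fun xi (S' : {set 'I_n}) => (if S' == S then 1 else 0) * ahat xi).
Local Notation betahat := (fun xi v => ratr (p xi * betabar C d w b S k' xi (ord xi) v) : R).

Let ord_perm xi := proj1 (ord_sorted xi).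
Let ord_sort xi := proj2 (ord_sorted xi).

Lemma scenario_alpha_ge0 xi : 0 <= ahat xi.
Proof. by rewrite ler0q mulr_ge0 // alphabarE greedy_alpha_ge0. Qed.

Lemma scenario_beta_le0 xi v : betahat xi v <= 0.
Proof.
rewrite lerq0 mulr_ge0_le0 // betabarE.
by rewrite (greedy_beta_le0 (ord_perm xi) (ord_sort xi) (S_cover xi)).
Qed.

Lemma scenario_beta_notin xi v : v \notin S -> betahat xi v = 0.
Proof.
by move=> vNS; rewrite /= betabarE (greedy_beta_notin _ _ _ (ord_perm xi) vNS) mulr0 rmorph0.
Qed.

Lemma scenario_reduced_cost xi v : v \in S ->
  betahat xi v + ahat xi <= ratr (p xi) * ratr (w v).
Proof.
move=> vS; rewrite -rmorphD -rmorphM ler_rat -mulrDr ler_wpM2l // alphabarE addrC.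
by rewrite betabarE (greedy_reduced_cost w_ge0 (ord_perm xi) (ord_sort xi) (S_cover xi) vS).
Qed.

Lemma scenario_dual_bound xi (e : R) : e <= #|S|%:R - k'%:R ->
  0 <= 1 + e - #|S|%:R + k'%:R ->
  ratr (p xi) * Lstar_xi R C d w b S k' xi * (1 + e - #|S|%:R + k'%:R) <=
  ahat xi * (e + (kxi C d xi S)%:~R - #|S|%:R) + \sum_v betahat xi v * (b v)%:R.
Proof.
move=> e_le e_ge; set delta := e - #|S|%:R + k'%:R.
have rhsE : ahat xi * (e + (kxi C d xi S)%:~R - #|S|%:R) + \sum_v betahat xi v * (b v)%:R =
    ratr (p xi) * (ratr (greedy_dual w b (ord xi) (t xi)) +
                   ratr (greedy_alpha w b (ord xi) (t xi)) * delta).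
  rewrite alphabarE /greedy_dual rmorphD !rmorphM rmorph_int intrB rmorph_sum.
  under eq_bigr do rewrite rmorphM betabarE -mulrA.
  under [in RHS]eq_bigr do rewrite rmorphM rmorph_nat.
  by rewrite -mulr_sumr /delta; ring.
have -> : 1 + e - #|S|%:R + k'%:R = 1 + delta by rewrite /delta; ring.
rewrite rhsE -mulrA ler_wpM2l ?ler0q //.
by apply: Lstar_xi_mul_le; rewrite ?ord_perm ?ord_sort ?S_cover //= /delta; lra.
Qed.

Lemma scenario_cut_le_cost xi (z : 'I_n -> R) : (forall v, 0 <= z v) ->
  \sum_v betahat xi v * z v + ahat xi * fS z S <= \sum_(v in S) ratr (p xi) * ratr (w v) * z v.
Proof.
move=> z_ge0; rewrite /fS mulr_sumr (bigID (fun v => v \in S)) /=.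
rewrite [X in _ + X + _]big1 => [|v vNS]; last by rewrite scenario_beta_notin ?mul0r.
rewrite addr0 -big_split /=; apply: ler_sum => v vS.
by rewrite -mulrDl ler_wpM2r ?scenario_reduced_cost.
Qed.

Lemma Lstar_ge0 : 0 <= Lstar R C p d w b S k'.
Proof. by apply: sumr_ge0 => xi _; rewrite mulr_ge0 ?ler0q // Lstar_xi_ge0. Qed.

Lemma multipliers_in_A : inA w alphahat betahat.
Proof.
split=> [xi S' _ | xi v | xi v w_v0].
- by case: eqP; rewrite ?mul0r // mul1r scenario_alpha_ge0.
- exact: scenario_beta_le0.
rewrite alphaAt_single //; case: ifPn => [vS|vNS].
  by have := scenario_reduced_cost xi vS; rewrite w_v0 rmorph0 mulr0.
by rewrite scenario_beta_notin // addr0.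
Qed.

Lemma SRI_in_Gamma (x : Edge n -> R) (theta : 'I_n -> R) (y : 'I_N -> 'I_n -> R) :
  inSRI C p d w b x theta y -> inGamma C p d w b x alphahat betahat theta y.
Proof.
case=> theta_ge0 y_box y_cover theta_ge; split=> //.
rewrite cut_lhs_single // cut_rhs_single //; apply: ler_sum => xi _.
rewrite [leRHS]addrC; apply: lerD.
  by rewrite ler_wpM2l ?scenario_alpha_ge0 //; have := y_cover xi S S_gt0; lra.
apply: ler_sum => v _; rewrite ler_wnM2l ?scenario_beta_le0 //.
by case/andP: (y_box xi v).
Qed.

Lemma Gamma_theta_bound (xbar : Edge n -> R) (theta : 'I_n -> R) :
  xE xbar S <= #|S|%:R - k'%:R ->
  (exists y, inGamma C p d w b xbar alphahat betahat theta y) ->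
  Lstar R C p d w b S k' * (1 + xE xbar S - #|S|%:R + k'%:R) <= fS theta S.
Proof.
move=> xE_le [y [theta_ge0 y_box cut theta_ge]].
have [neg|nonneg] := ltrP (1 + xE xbar S - #|S|%:R + k'%:R) 0.
  apply: (@le_trans _ _ 0); first by rewrite mulr_ge0_le0 ?Lstar_ge0 ?ltW.
  by apply: sumr_ge0 => v _.
rewrite cut_lhs_single // cut_rhs_single // in cut.
apply: (@le_trans _ _ (\sum_xi \sum_(v in S) ratr (p xi) * ratr (w v) * y xi v)); last first.
  by rewrite /fS exchange_big; apply: ler_sum => v _; apply: theta_ge.
rewrite /Lstar mulr_suml; apply: le_trans (le_trans _ cut) _.
  by apply: ler_sum => xi _; apply: scenario_dual_bound.
apply: ler_sum => xi _; apply: scenario_cut_le_cost => v.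
by case/andP: (y_box xi v).
Qed.

End ValidInequality.

Theorem theorem4 (R : realType) (n N : nat) (C : rat) (p : 'I_N -> rat)
  (d : 'I_N -> 'I_n -> rat) (X : Xkind)
  (w : 'I_n -> rat) (b : 'I_n -> nat) (S : {set 'I_n}) (k' : nat)
  (ord : 'I_N -> seq 'I_n) :
  0 < C ->
  (forall xi, 0 <= p xi) -> \sum_(xi < N) p xi = 1 ->
  (forall xi v, 0 <= d xi v <= C) ->
  (if X is XCvrp k then (0 < k)%N else True) ->
  (forall v, 0 <= w v) ->
  (0 < #|S|)%N -> (0 < k')%N ->
  (forall xi, kxi C d xi S - k'%:Z <= (\sum_(v in S) b v)%:Z) ->
  (forall xi, perm_eq (ord xi) (enum S) /\ sorted (fun u v => w u <= w v) (ord xi)) ->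
  let alphahat := fun xi (S' : {set 'I_n}) =>
    (if S' == S then 1 else 0) * ratr (p xi * alphabar C d w b S k' xi (ord xi)) : R in
  let betahat := fun xi v =>
    ratr (p xi * betabar C d w b S k' xi (ord xi) v) : R in
  [/\ inA w alphahat betahat,
      forall (xbar : Edge n -> R) (theta : 'I_n -> R),
        inX C p d X xbar -> xE xbar S <= #|S|%:R - k'%:R ->
        (exists y, inGamma C p d w b xbar alphahat betahat theta y) ->
        fS theta S >= Lstar R C p d w b S k'
                        * (1 + xE xbar S - #|S|%:R + k'%:R)
    & (forall (x : Edge n -> R) (theta : 'I_n -> R),
         inP C p d w b X x theta -> xE x S <= #|S|%:R - k'%:R) ->
      forall (x : Edge n -> R) (theta : 'I_n -> R),
         inP C p d w b X x theta ->
         fS theta S >= Lstar R C p d w b S k'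
                        * (1 + xE x S - #|S|%:R + k'%:R)].
Proof.
move=> _ p_ge0 _ _ _ w_ge0 S_gt0 _ S_cover ord_sorted alphahat betahat.
have theta_bound := Gamma_theta_bound p_ge0 w_ge0 S_gt0 S_cover ord_sorted.
split=> [|xbar theta _|valid x theta Px].
- exact: multipliers_in_A p_ge0 w_ge0 S_gt0 S_cover ord_sorted.
- exact: theta_bound.
apply: theta_bound (valid x theta Px) _.
case: Px => _ [y /(SRI_in_Gamma p_ge0 w_ge0 S_gt0 S_cover ord_sorted) Gamma_y].
by exists y.
Qed.
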